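(* Let $(E,C)$ be a finite bipartite separated graph and $H\in\mathcal H(E,C)$. Put $$H_1:=\bigcup\{s_1(X(x)):x\in E^1,\ s(x)\in H\}\ \cup\ (H\cap E_1^{0,0}).$$ Then $H_1\in\mathcal H(E_1,C^1)$, and $H\cup H_1\in\mathcal H(F_1,D^1)$ is the hereditary closure of $H$ inside $(F_1,D^1)$.
   Context: A separated graph $(E,C)$: directed graph $E=(E^0,E^1,r,s)$ with $C=\bigsqcup_vC_v$, $C_v$ a partition of $r^{-1}(v)$ into non-empty sets. Finite bipartite: $E$ finite, $E^0=E^{0,0}\sqcup E^{0,1}$, $s(E^1)=E^{0,1}$, $r(E^1)=E^{0,0}$. Write $C_u=\{X^u_1,\dots,X^u_{k_u}\}$ for $u\in E^{0,0}$. $(E_1,C^1)$ has $E_1^{0,0}=E^{0,1}$, $E_1^{0,1}=\{v(x_1,\dots,x_{k_u}):u\in E^{0,0},x_j\in X^u_j\}$, edges $\alpha^{x_i}(x_1,\dots,\widehat{x_i},\dots,x_{k_u})$ ($1\le i\le k_u$) with range $r_1=s(x_i)$ and source $s_1=v(x_1,\dots,x_{k_u})$, and $C^1_v=\{X(x):x\in s^{-1}(v)\}$ where $X(x_i)=\{\alpha^{x_i}(x_1,\dots,\widehat{x_i},\dots,x_{k_u}):x_j\in X^u_j\ (j\ne i)\}$. $(F_1,D^1)$ is the separated graph $(E,C)\cup(E_1,C^1)$ obtained by identifying $E^{0,1}$ with $E_1^{0,0}$. For a separated graph $(F,D)$, $H\subseteq F^0$ is hereditary if $r(e)\in H$ implies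 $s(e)\in H$, and $D$-saturated if, for $v\in F^0$ and $X\in D_v$, $s(X)\subseteq H$ implies $v\in H$; $\mathcal H(F,D)$ denotes the set of hereditary $D$-saturated subsets. *)

From HB Require Import structures.
From mathcomp Require Import all_boot.
Set Implicit Arguments. Unset Strict Implicit. Unset Printing Implicit Defensive.

(* A separated graph on vertex type V and edge type E: range r, source s,
   and for each vertex v a set C v of subsets of r^{-1}(v). *)
Section SepGraph.
Variables (V E : finType) (r s : E -> V) (C : V -> {set {set E}}).

(* C v is a partition of r^{-1}(v) into non-empty sets (mathcomp's
   [partition] includes that the blocks are non-empty). *)
Definition is_sep_graph : Prop := forall v : V, partition (C v) [set e | r e == v].

Definition hereditary (H : {set V}) : Prop :=
  forall e : E, r e \in H -> s e \in H.

(* Vs is the vertex set of the graph (a subset of the ambient type V). *)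
Definition saturated (Vs H : {set V}) : Prop :=
  forall v, v \in Vs -> forall X, X \in C v -> s @: X \subset H -> v \in H.

Definition hered_sat (Vs H : {set V}) : Prop :=
  [/\ H \subset Vs, hereditary H & saturated Vs H].

Definition hered_closure (Vs H K : {set V}) : Prop :=
  [/\ H \subset K, K \subset Vs, hereditary K &
      forall K' : {set V}, K' \subset Vs -> hereditary K' -> H \subset K' -> K \subset K'].
End SepGraph.

(* The construction (E_1, C^1) and (F_1, D^1) from a bipartite (E, C)
   with E^{0,0} = V0 and E^{0,1} = ~: V0. *)
Section Construction.
Local Unset Implicit Arguments.
Variables (V E : finType) (r s : E -> V) (C : V -> {set {set E}}) (V0 : {set V}).

(* T = {x_1,...,x_{k_u}} with x_j in X^u_j: T ⊆ r^{-1}(u) meets every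
   X in C_u in exactly one edge. *)
Definition transversal (u : V) (T : {set E}) : bool :=
  (T \subset [set e | r e == u]) && [forall X in C u, #|T :&: X| == 1].

(* E_1^{0,1}: the vertices v(x_1,...,x_{k_u}), encoded as (u, {x_1..x_k}). *)
Definition W1 : finType := {p : V * {set E} | (p.1 \in V0) && transversal p.1 p.2}.

(* Edges of E_1: alpha^{x}(others) with x in the tuple, encoded as (w, x). *)
Definition Ed1 : finType := {q : W1 * E | q.2 \in (val q.1).2}.

(* Vertices of F_1 (and ambient type for E_1): E^0 ⊔ E_1^{0,1},
   with E_1^{0,0} = E^{0,1} embedded via inl. *)
Definition VF : finType := (V + W1)%type.
Definition EF : finType := (E + Ed1)%type.

Definition r1 (q : Ed1) : VF := inl (s (val q).2).
Definition s1 (q : Ed1) : VF := inr (val q).1.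

Definition X1 (x : E) : {set Ed1} := [set q : Ed1 | (val q).2 == x].

Definition C1 (v : VF) : {set {set Ed1}} :=
  match v with
  | inl v => [set X1 x | x in [set x : E | s x == v]]
  | inr _ => set0
  end.

Definition V1s : {set VF} :=
  [set (inl v : VF) | v in ~: V0] :|: [set (inr w : VF) | w in [set: W1]].

Definition rF (e : EF) : VF :=
  match e with inl e => inl (r e) | inr q => r1 q end.
Definition sF (e : EF) : VF :=
  match e with inl e => inl (s e) | inr q => s1 q end.

Definition DF (v : VF) : {set {set EF}} :=
  match v with
  | inl v0 => [set [set (inl e : EF) | e in X] | X : {set E} in C v0]
              :|: [set [set (inr q : EF) | q in X] | X : {set Ed1} in C1 (inl v0)]
  | inr _ => set0
  end.

Definition embH (H : {set V}) : {set VF} := [set (inl v : VF) | v in H].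

Definition H1 (H : {set V}) : {set VF} :=
  (\bigcup_(x | s x \in H) (s1 @: X1 x)) :|: [set (inl v : VF) | v in H :\: V0].
End Construction.

From Pilot Require Import Defs.
From HB Require Import structures.
From mathcomp Require Import all_boot.

Set Implicit Arguments.
Unset Strict Implicit.
Unset Printing Implicit Defensive.

(* The heart of the matter is that s_1(X(x)) is contained in H_1 only when
   s(x) lies in H.  Indeed, if s(x) is not in H then neither is u := r(x), as
   H is hereditary, so by saturation every block of C_u contains an edge whose
   source lies outside H.  Choosing such an edge in every block, and x itself
   in its own block, gives a vertex v(x_1,...,x_{k_u}) in s_1(X(x)) but not in
   H_1, which contains such a vertex exactly when some s(x_j) lies in H.
   Saturation of H_1 and of H ∪ H_1 both reduce to this fact, while
   minimality of H ∪ H_1 holds because every vertex of H_1 outside H is the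
   source of an edge of E_1 whose range lies in H. *)

Lemma partition_transversal (T : finType) (P : {set {set T}}) (D : {set T})
    (p : pred T) (x : T) :
  partition P D -> x \in D -> p x ->
  (forall X, X \in P -> exists2 y, y \in X & p y) ->
  exists S : {set T},
    [/\ x \in S, S \subset D, {in S, forall y, p y}
      & forall X, X \in P -> #|S :&: X| = 1].
Proof.
move=> /and3P[/eqP covP trivP _] xD px blockP.
pose g (X : {set T}) := if x \in X then x else odflt x [pick y in X | p y].
have gP X : X \in P -> g X \in X /\ p (g X).
  rewrite /g; case: ifP => [xX _ | _ XP]; first by [].
  case: pickP => [y /andP[] // | none].
  by have [y yX py] := blockP X XP; move: (none y); rewrite yX py.
exists (g @: P); split.
- have xPx : x \in pblock P x by rewrite mem_pblock covP.
  by apply/imsetP; exists (pblock P x); rewrite ?pblock_mem ?covP // /g xPx.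
- apply/subsetP => _ /imsetP[X XP ->]; rewrite -covP.
  by apply/bigcupP; exists X; last by case: (gP X XP).
- by move=> _ /imsetP[X XP ->]; case: (gP X XP).
move=> X XP; suff -> : g @: P :&: X = [set g X] by rewrite cards1.
apply/setP => y; rewrite !inE.
apply/andP/eqP => [[/imsetP[X' X'P ->] gX'X] | ->].
  have [gX'X' _] := gP X' X'P.
  by rewrite -(def_pblock trivP X'P gX'X') (def_pblock trivP XP gX'X).
by rewrite imset_f //; case: (gP X XP).
Qed.

Lemma saturated_block_escape (V E : finType) (s : E -> V)
    (C : V -> {set {set E}}) (Vs H : {set V}) (u : V) (X : {set E}) :
  saturated s C Vs H -> u \in Vs -> u \notin H -> X \in C u ->
  exists2 y, y \in X & s y \notin H.
Proof.
move=> satH uVs uH XC; apply/exists_inP.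
apply: contraR uH => /exists_inPn sXH.
apply: (satH u uVs X XC); apply/subsetP => _ /imsetP[y yX ->].
by move: (sXH y yX); rewrite negbK.
Qed.

Section Refinement.
Variables (V E : finType) (r s : E -> V) (C : V -> {set {set E}}).
Variable V0 : {set V}.
Hypothesis hC : is_sep_graph r C.
Hypothesis hbip : forall e : E, r e \in V0 /\ s e \notin V0.
Variable H : {set V}.
Hypothesis hH : hered_sat r s C [set: V] H.

Local Notation VF := (VF V E r C V0).
Local Notation W1 := (W1 V E r C V0).
Local Notation Ed1 := (Ed1 V E r C V0).
Local Notation s1 := (s1 V E r C V0).
Local Notation X1 := (X1 V E r C V0).
Local Notation H1 := (H1 V E r s C V0 H).
Local Notation embH := (embH V E r C V0 H).
Local Notation r1 := (r1 V E r s C V0).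
Local Notation C1 := (C1 V E r s C V0).
Local Notation V1s := (V1s V E r C V0).
Local Notation rF := (rF V E r s C V0).
Local Notation sF := (sF V E r s C V0).
Local Notation DF := (DF V E r s C V0).

Lemma mem_H1_inl v : ((inl v : VF) \in H1) = (v \in H :\: V0).
Proof.
rewrite /H1 inE; apply/orP/idP => [[/bigcupP[? _ /imsetP[? _ //]] | ] | vH].
  by case/imsetP => v' v'H [->].
by right; apply: imset_f.
Qed.

Lemma mem_H1_inr (w : W1) :
  ((inr w : VF) \in H1) = [exists x in (val w).2, s x \in H].
Proof.
rewrite /H1 inE; apply/orP/exists_inP => [[] | [x xw sxH]].
- case/bigcupP => x sxH /imsetP[q qX [->]].
  by exists x => //; move: qX (valP q); rewrite inE => /eqP ->.
- by case/imsetP.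
left; apply/bigcupP; exists x => //.
by apply/imsetP; exists (exist _ (w, x) xw : Ed1); rewrite ?inE.
Qed.

Lemma s1_in_H1 (q : Ed1) : s (val q).2 \in H -> s1 q \in H1.
Proof.
by move=> sqH; rewrite /s1 mem_H1_inr; apply/exists_inP; exists (val q).2;
  first exact: (valP q).
Qed.

Lemma mem_embH_inl v : ((inl v : VF) \in embH) = (v \in H).
Proof.
by apply/imsetP/idP => [[v' v'H [->]] // | vH]; exists v.
Qed.

Lemma mem_embH_inr (w : W1) : ((inr w : VF) \in embH) = false.
Proof. by apply/negbTE/imsetP => -[]. Qed.

Lemma mem_embHU_inl v : ((inl v : VF) \in embH :|: H1) = (v \in H).
Proof.
by rewrite inE mem_embH_inl mem_H1_inl inE; case: (v \in H); rewrite ?andbF.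
Qed.

Lemma mem_embHU_inr (w : W1) :
  ((inr w : VF) \in embH :|: H1) = ((inr w : VF) \in H1).
Proof. by rewrite inE mem_embH_inr. Qed.

Lemma s1_X1_sub_H1 (x : E) : s1 @: X1 x \subset H1 -> s x \in H.
Proof.
case: hH => _ herH satH; apply: contraTT => sxH.
have rxH : r x \notin H by apply: contra sxH; apply: herH.
have [|T [xT Tr TH TX]] := partition_transversal (p := fun y => s y \notin H)
    (hC (r x)) _ sxH (fun X => saturated_block_escape satH (in_setT _) rxH).
  by rewrite inE.
have wP : (r x \in V0) && Defs.transversal V E r C (r x) T.
  rewrite (proj1 (hbip x)) /Defs.transversal Tr.
  by apply/forall_inP => X XC; rewrite TX.
pose w : W1 := exist _ (r x, T) wP.
apply/subsetPn; exists (s1 (exist _ (w, x) xT : Ed1)).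
  by apply: imset_f; rewrite inE.
by rewrite /s1 mem_H1_inr; apply/exists_inPn => y /TH.
Qed.

Lemma H1_hered_sat : hered_sat r1 s1 C1 V1s H1.
Proof.
split.
- apply/subsetP => -[v | w] vH1; rewrite /V1s inE; last first.
    by apply/orP; right; apply: imset_f.
  move: vH1; rewrite mem_H1_inl => /setDP[_ vV0].
  by apply/orP; left; apply: imset_f; rewrite inE.
- by move=> q; rewrite /r1 mem_H1_inl => /setDP[sqH _]; apply: s1_in_H1.
case=> [v | w] _ X; last by rewrite inE.
case/imsetP => x; rewrite inE => /eqP <- -> /s1_X1_sub_H1 sxH.
by rewrite mem_H1_inl inE sxH (proj2 (hbip x)).
Qed.

Lemma embHU_hereditary : hereditary rF sF (embH :|: H1).
Proof.
case: hH => _ herH _.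
case=> [e | q] /=; first by rewrite !mem_embHU_inl; apply: herH.
by rewrite /r1 mem_embHU_inl inE => /s1_in_H1 ->; rewrite orbT.
Qed.

Lemma embHU_saturated : saturated sF DF [set: VF] (embH :|: H1).
Proof.
case: hH => _ _ satH.
case=> [v | w] _ X; last by rewrite inE.
rewrite mem_embHU_inl inE => /orP[/imsetP[X' X'C ->] | /imsetP[Y /imsetP[x]]].
  move=> sX'; apply: (satH v (in_setT v) X' X'C).
  apply/subsetP => _ /imsetP[e eX' ->].
  rewrite -mem_embHU_inl; apply: (subsetP sX').
  by apply/imsetP; exists (inl e) => //; apply: imset_f.
rewrite inE => /eqP <- -> -> sX1; apply: s1_X1_sub_H1.
apply/subsetP => _ /imsetP[q qX ->].
rewrite -mem_embHU_inr; apply: (subsetP sX1).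
by apply/imsetP; exists (inr q) => //; apply: imset_f.
Qed.

Lemma H1_sub_hereditary (K : {set VF}) :
  hereditary rF sF K -> embH \subset K -> H1 \subset K.
Proof.
move=> herK HK; apply/subsetP => -[v | w].
  rewrite mem_H1_inl => /setDP[vH _].
  by apply: (subsetP HK); rewrite mem_embH_inl.
rewrite mem_H1_inr => /exists_inP[x xw sxH].
apply: (herK (inr (exist _ (w, x) xw : Ed1))); apply: (subsetP HK).
by rewrite mem_embH_inl.
Qed.

End Refinement.

Theorem lemma5 (V E : finType) (r s : E -> V) (C : V -> {set {set E}})
  (V0 : {set V})
  (hC : @is_sep_graph V E r C)
  (hbip : forall e : E, r e \in V0 /\ s e \notin V0)
  (H : {set V}) (hH : @hered_sat V E r s C [set: V] H) :
  [/\ @hered_sat (VF V E r C V0) (Ed1 V E r C V0)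
        (r1 V E r s C V0) (s1 V E r C V0) (C1 V E r s C V0)
        (V1s V E r C V0) (H1 V E r s C V0 H),
      @hered_sat (VF V E r C V0) (EF V E r C V0)
        (rF V E r s C V0) (sF V E r s C V0) (DF V E r s C V0)
        [set: VF V E r C V0]
        (embH V E r C V0 H :|: H1 V E r s C V0 H)
    & @hered_closure (VF V E r C V0) (EF V E r C V0)
        (rF V E r s C V0) (sF V E r s C V0) [set: VF V E r C V0]
        (embH V E r C V0 H) (embH V E r C V0 H :|: H1 V E r s C V0 H)].
Proof.
have herU := embHU_hereditary (V0 := V0) hH.
split.
- exact: H1_hered_sat.
- by split; [apply: subsetT | | apply: embHU_saturated].
split; [exact: subsetUl | exact: subsetT | exact: herU |].
by move=> K _ herK HK; rewrite subUset HK (H1_sub_hereditary herK HK).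
Qed.
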